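(* Let $(X_1,\dots,X_n)$, $2\le n\le\infty$, be a random vector or sequence such that for each $l=2,\dots,n$ the vector $(X_1,\dots,X_l)$ is RE$(l)$. Then $(X_1,\dots,X_n)$ is SIAMX* and SIAMN*. Moreover, it is SSIAMX* if $\Pr[X_l>\max(|X_1|,\dots,|X_{l-1}|)]>0$ for $l=3,\dots,n$, and it is SSIAMN* if $\Pr[X_l<-\max(|X_1|,\dots,|X_{l-1}|)]>0$ for $l=3,\dots,n$.
   Context: A random vector $(Y_1,\dots,Y_l)$ is RE$(k,l)$ for $1\le k<l$ if its distribution is unchanged when $(Y_k,Y_l)$ is replaced by $(-Y_l,-Y_k)$ (other coordinates fixed); it is RE$(l)$ if it is RE$(k,l)$ for some $k<l$. For random variables $U,V$, $U\le_{\mathrm{st}}V$ means $F_U(x)\ge F_V(x)$ for all $x$ ($F$ the cdf), and $U<_{\mathrm{st}}V$ means additionally strict inequality for at least one $x$. $(X_1,\dots,X_n)$ is SIAMX* if $|X_1|\overset{d}{=}|\max(X_1,X_2)|$ and $|\max(X_1,\dots,X_{l-1})|\le_{\mathrm{st}}|\max(X_1,\dots,X_l)|$ for $l=3,\dots,n$; SSIAMX* if moreover these last inequalities are strict ($<_{\mathrm{st}}$). SIAMN* and SSIAMN* are defined the same way with $\max$ replaced by $\min$ (including $|X_1|\overset{d}{=}|\min(X_1,X_2)|$). *)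

From HB Require Import structures.
From mathcomp Require Import all_boot all_order all_algebra.
From mathcomp Require Import all_classical all_reals all_analysis.
Set Implicit Arguments. Unset Strict Implicit. Unset Printing Implicit Defensive.
Import Order.TTheory GRing.Theory Num.Theory.
Local Open Scope classical_set_scope.
Local Open Scope ring_scope.

(* Length n of the vector/sequence: [Some m] = finite length m, [None] = infinite. *)
Definition idx_le (l : nat) (n : option nat) : Prop :=
  if n is Some m then (l <= m)%N else True.

Section defs.
Context {d : measure_display} {T : measurableType d} {R : realType}.
Variable P : probability T R.

(* the random vector (Y_1,...,Y_l) (coordinates indexed from 1) *)
Definition rvec (Y : nat -> T -> R) (l : nat) (w : T) : l.-tuple R :=
  [tuple Y i.+1 w | i < l].

Definition reswap (Y : nat -> T -> R) (k l : nat) : nat -> T -> R :=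
  fun i w => if i == k then - Y l w else if i == l then - Y k w else Y i w.

Definition same_law {l : nat} (U V : T -> l.-tuple R) : Prop :=
  forall A : set (l.-tuple R), measurable A -> P (U @^-1` A) = P (V @^-1` A).

Definition RE_kl (Y : nat -> T -> R) (k l : nat) : Prop :=
  same_law (rvec Y l) (rvec (reswap Y k l) l).

Definition RE_l (Y : nat -> T -> R) (l : nat) : Prop :=
  exists k, (1 <= k < l)%N /\ RE_kl Y k l.

Definition eq_dist (U V : T -> R) : Prop :=
  forall A : set R, measurable A -> P (U @^-1` A) = P (V @^-1` A).

Definition cdfP (U : T -> R) (x : R) : \bar R := P [set w | U w <= x].

Definition st_le (U V : T -> R) : Prop :=
  forall x : R, (cdfP V x <= cdfP U x)%E.

Definition st_lt (U V : T -> R) : Prop :=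
  st_le U V /\ exists x : R, (cdfP V x < cdfP U x)%E.

End defs.

(* max(X_1,...,X_l) and min(X_1,...,X_l), for l >= 1 (value at l = 0 is X_1, unused) *)
Fixpoint maxX {T : Type} {R : realType} (X : nat -> T -> R) (l : nat) (w : T) : R :=
  match l with
  | 0 | 1 => X 1%N w
  | l'.+1 => Num.max (maxX X l' w) (X l'.+1 w)
  end.

Fixpoint minX {T : Type} {R : realType} (X : nat -> T -> R) (l : nat) (w : T) : R :=
  match l with
  | 0 | 1 => X 1%N w
  | l'.+1 => Num.min (minX X l' w) (X l'.+1 w)
  end.

Definition maxabsX {T : Type} {R : realType} (X : nat -> T -> R) (l : nat) (w : T) : R :=
  maxX (fun i w => `|X i w|) l w.

Section props.
Context {d : measure_display} {T : measurableType d} {R : realType}.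
Variable P : probability T R.

Definition SIAMX (X : nat -> T -> R) (n : option nat) : Prop :=
  eq_dist P (fun w => `|X 1%N w|) (fun w => `|maxX X 2 w|) /\
  forall l, (3 <= l)%N -> idx_le l n ->
    st_le P (fun w => `|maxX X l.-1 w|) (fun w => `|maxX X l w|).

Definition SSIAMX (X : nat -> T -> R) (n : option nat) : Prop :=
  eq_dist P (fun w => `|X 1%N w|) (fun w => `|maxX X 2 w|) /\
  forall l, (3 <= l)%N -> idx_le l n ->
    st_lt P (fun w => `|maxX X l.-1 w|) (fun w => `|maxX X l w|).

Definition SIAMN (X : nat -> T -> R) (n : option nat) : Prop :=
  eq_dist P (fun w => `|X 1%N w|) (fun w => `|minX X 2 w|) /\
  forall l, (3 <= l)%N -> idx_le l n ->
    st_le P (fun w => `|minX X l.-1 w|) (fun w => `|minX X l w|).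

Definition SSIAMN (X : nat -> T -> R) (n : option nat) : Prop :=
  eq_dist P (fun w => `|X 1%N w|) (fun w => `|minX X 2 w|) /\
  forall l, (3 <= l)%N -> idx_le l n ->
    st_lt P (fun w => `|minX X l.-1 w|) (fun w => `|minX X l w|).

End props.

From HB Require Import structures.
From mathcomp Require Import all_boot all_order all_algebra.
From mathcomp Require Import all_classical all_reals all_analysis.
From mathcomp Require Import measurable_realfun.
From mathcomp.algebra_tactics Require Import lra.
From mathcomp Require Import zify.
Import Order.TTheory GRing.Theory Num.Theory.
Local Open Scope classical_set_scope.
Local Open Scope ring_scope.

(* Write M_l = max(X_1,...,X_l) and fix x.  If |M_(m+1)| <= x < |M_m|, then
   M_m < -x <= X_(m+1) <= x.  The reflection RE(k,m+1) carries this "crossing"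
   event to one where X_(m+1) > x, X_k in [-x,x] and all other X_i (i <= m)
   lie below -x; there |M_m| <= x < |M_(m+1)|.  The event
   max_(i<=m) |X_i| <= x < X_(m+1) lies in the same difference and, as m >= 2,
   is disjoint from it.  Hence
     P(|M_(m+1)| <= x) + P(max_(i<=m) |X_i| <= x < X_(m+1)) <= P(|M_m| <= x),
   and a countable union over rational levels x turns positivity of
   P(max_(i<=m) |X_i| < X_(m+1)) into strictness.  For l = 2, RE(1,2) directly
   gives |X_1| =d |M_2|; the statements on minima are those on maxima of -X. *)

Section maxX_theory.
Context {T : Type} {R : realType}.
Implicit Types (F : nat -> T -> R) (w : T).

Lemma maxXS F j w : (0 < j)%N -> maxX F j.+1 w = Num.max (maxX F j w) (F j.+1 w).
Proof. by case: j. Qed.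

Lemma minXS F j w : (0 < j)%N -> minX F j.+1 w = Num.min (minX F j w) (F j.+1 w).
Proof. by case: j. Qed.

Lemma le_maxX F j w i : (1 <= i <= j)%N -> F i w <= maxX F j w.
Proof.
elim: j => [|[|j] IH] ij; first by lia.
  by have -> : i = 1%N by lia.
rewrite maxXS // le_max; have [->|ne_ij] := eqVneq i j.+2; first by rewrite lexx orbT.
by rewrite IH //; lia.
Qed.

Lemma maxX_attained F j w : (0 < j)%N -> exists2 i, (1 <= i <= j)%N & maxX F j w = F i w.
Proof.
elim: j => [//|[|j] IH] _; first by exists 1%N.
rewrite maxXS //; have [i ij ->] := IH isT.
case: (leP (F i w) (F j.+2 w)) => _; first by exists j.+2; rewrite ?leqnn.
by exists i => //; lia.
Qed.

Lemma maxX_le F j w c : (0 < j)%N ->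
  (maxX F j w <= c) <-> (forall i, (1 <= i <= j)%N -> F i w <= c).
Proof.
move=> j0; split=> [Mc i ij|Fc]; first exact: le_trans (le_maxX F j w i ij) Mc.
by have [i ij ->] := maxX_attained F j w j0; exact: Fc.
Qed.

Lemma maxX_lt F j w c : (0 < j)%N ->
  (maxX F j w < c) <-> (forall i, (1 <= i <= j)%N -> F i w < c).
Proof.
move=> j0; split=> [Mc i ij|Fc]; first exact: le_lt_trans (le_maxX F j w i ij) Mc.
by have [i ij ->] := maxX_attained F j w j0; exact: Fc.
Qed.

Lemma minX_oppr F j w : (0 < j)%N -> minX F j w = - maxX (fun i w => - F i w) j w.
Proof.
elim: j => [//|[|j] IH] _; first by rewrite /= opprK.
by rewrite minXS // maxXS // IH // oppr_max !opprK.
Qed.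

Lemma abs_maxX_le F j w : (0 < j)%N -> `|maxX F j w| <= maxabsX F j w.
Proof.
move=> j0; have le_abs i : (1 <= i <= j)%N -> `|F i w| <= maxabsX F j w.
  exact: (le_maxX (fun i w => `|F i w|)).
rewrite ler_norml; apply/andP; split.
  have := le_abs 1%N; rewrite j0 => /(_ isT); rewrite ler_norml => /andP[h _].
  by apply: le_trans h (le_maxX F j w 1 _); rewrite j0.
apply/maxX_le => // i ij; apply: le_trans (le_abs i ij); exact: ler_norm.
Qed.

Lemma abs_maxX_gt F j w i x : (1 <= i <= j)%N -> x < F i w -> x < `|maxX F j w|.
Proof. by move=> ij /lt_le_trans; apply; apply: le_trans (le_maxX F j w i ij) (ler_norm _). Qed.

Lemma abs_maxXS_le F m w x : (0 < m)%N -> `|maxX F m.+1 w| <= x ->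
  `|maxX F m w| <= x \/ [/\ maxX F m w < - x, - x <= F m.+1 w & F m.+1 w <= x].
Proof.
move=> m0; rewrite maxXS // !ler_norml ge_max le_max.
move=> /andP[/orP[lo|lo] /andP[hiM hi]]; first by left; rewrite lo hiM.
by have [_|ltM] := leP (- x) (maxX F m w); [left; rewrite hiM|right].
Qed.

End maxX_theory.

Lemma eq_maxX {T T' : Type} {R : realType} (F : nat -> T -> R) (G : nat -> T' -> R)
    j w v : (0 < j)%N ->
  (forall i, (1 <= i <= j)%N -> F i w = G i v) -> maxX F j w = maxX G j v.
Proof.
elim: j => [//|[|j] IH] _ FG; first exact: FG.
rewrite (maxXS F) // (maxXS G) // IH ?FG ?leqnn // => i /andP[i1 ij].
by apply: FG; rewrite i1 ltnW.
Qed.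

Section measurability.
Context {d : measure_display} {U : measurableType d} {R : realType}.

Lemma measurable_preimageT {d'} {V : measurableType d'} (f : U -> V) A :
  measurable_fun setT f -> measurable A -> measurable (f @^-1` A).
Proof. by move=> mf mA; rewrite -[_ @^-1` _]setTI; exact: mf. Qed.

Lemma measurable_ltr_set (f g : U -> R) : measurable_fun setT f ->
  measurable_fun setT g -> measurable [set x | f x < g x].
Proof.
move=> mf mg; rewrite -[X in measurable X]/((fun x => f x < g x) @^-1` [set true]).
exact: measurable_preimageT (measurable_fun_ltr mf mg) _.
Qed.

Lemma measurable_ler_set (f g : U -> R) : measurable_fun setT f ->
  measurable_fun setT g -> measurable [set x | f x <= g x].
Proof.
move=> mf mg; rewrite -[X in measurable X]/((fun x => f x <= g x) @^-1` [set true]).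
exact: measurable_preimageT (measurable_fun_ler mf mg) _.
Qed.

Lemma measurable_maxX (F : nat -> U -> R) j : (0 < j)%N ->
  (forall i, (1 <= i <= j)%N -> measurable_fun setT (F i)) ->
  measurable_fun setT (maxX F j).
Proof.
elim: j => [//|[|j] IH] _ mF; first exact: mF.
rewrite (_ : maxX F j.+2 = maxX F j.+1 \max F j.+2); last first.
  by apply/funext => w; rewrite maxXS.
by apply: measurable_maxr; [apply: IH => // i ij|]; apply: mF; lia.
Qed.

End measurability.

(* 1-based, like [rvec]; [0] out of range. *)
Definition tcoord {R : realType} {l : nat} (i : nat) (t : l.-tuple R) : R := nth 0 t i.-1.

Lemma measurable_tcoord {R : realType} {l : nat} i : measurable_fun setT (@tcoord R l i).
Proof.
have [il|li] := ltnP i.-1 l.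
  rewrite (_ : tcoord i = fun t => tnth t (Ordinal il)); first exact: measurable_tnth.
  by apply/funext => t; rewrite (tnth_nth 0).
rewrite (_ : tcoord i = cst 0); first exact: measurable_cst.
by apply/funext => t; rewrite /tcoord nth_default // size_tuple.
Qed.

Section random_vectors.
Context {d : measure_display} {T : measurableType d} {R : realType}.
Implicit Types (Y : nat -> T -> R).

Lemma tcoord_rvec Y l w i : (1 <= i <= l)%N -> tcoord i (rvec Y l w) = Y i w.
Proof.
case: i => [//|i] /andP[_ il].
by rewrite /tcoord -(tnth_nth 0 _ (Ordinal il)) tnth_mktuple.
Qed.

Lemma maxX_rvec Y l w j : (0 < j <= l)%N -> maxX tcoord j (rvec Y l w) = maxX Y j w.
Proof.
by case/andP=> j0 jl; apply: eq_maxX => // i ij; rewrite tcoord_rvec //; lia.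
Qed.

Lemma measurable_rvec Y l : (forall i, (1 <= i <= l)%N -> measurable_fun setT (Y i)) ->
  measurable_fun setT (rvec Y l).
Proof.
move=> mY; apply/measurable_fun_tnthP => j.
rewrite (_ : _ \o _ = Y j.+1); first by apply: mY; rewrite ltn_ord.
by apply/funext => w /=; rewrite tnth_mktuple.
Qed.

Lemma reswap_k Y k l w : reswap Y k l k w = - Y l w.
Proof. by rewrite /reswap eqxx. Qed.

Lemma reswap_l Y k l w : k != l -> reswap Y k l l w = - Y k w.
Proof. by rewrite /reswap eq_sym => /negbTE ->; rewrite eqxx. Qed.

Lemma reswap_id Y k l i w : i != k -> i != l -> reswap Y k l i w = Y i w.
Proof. by rewrite /reswap => /negbTE -> /negbTE ->. Qed.

Lemma measurable_reswap Y k l i : (1 <= k <= l)%N ->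
  (forall j, (1 <= j <= l)%N -> measurable_fun setT (Y j)) ->
  (1 <= i <= l)%N -> measurable_fun setT (reswap Y k l i).
Proof.
move=> kl mY il; rewrite /reswap.
case: eqP => _; first by apply: measurable_funN; apply: mY; lia.
by case: eqP => _; [apply: measurable_funN|]; apply: mY.
Qed.

End random_vectors.

Lemma le_measure_exchange {d} {T : measurableType d} {R : realType}
    (mu : {measure set T -> \bar R}) (A B C C' F : set T) :
  measurable A -> measurable B -> measurable C -> measurable C' -> measurable F ->
  A `<=` B `|` C -> mu C = mu C' -> C' `<=` B `\` A -> F `<=` B `\` A ->
  C' `&` F = set0 -> (mu A + mu F <= mu B)%E.
Proof.
move=> mA mB mC mC' mF ABC CC' C'BA FBA C'F0.
have mAB : measurable (A `&` B) by exact: measurableI.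
have leA : (mu A <= mu (A `&` B) + mu C)%E.
  apply: le_trans (measureU2 _ mAB mC).
  apply: le_measure; rewrite ?inE //; first exact: measurableU.
  by move=> w Aw; have [Bw|Cw] := ABC w Aw; [left|right].
have leC'F : (mu C' + mu F <= mu (B `\` A))%E.
  rewrite -measureU //; apply: le_measure; rewrite ?inE //; last by move=> w [|]; auto.
  - exact: measurableU.
  - exact: measurableD.
rewrite (measureDI mu mB mA) setIC; apply: le_trans (leeD2r _ leA) _.
by rewrite CC' -addeA addeC; exact: leeD2r.
Qed.

Lemma reswap_crossing {d} {T : measurableType d} {R : realType}
    (X : nat -> T -> R) m (x : R) w k : (2 <= m)%N -> (1 <= k <= m)%N ->
  maxX (reswap X k m.+1) m w < - x -> - x <= - X k w <= x ->
  [/\ `|maxX X m w| <= x, x < X m.+1 w & x < maxabsX X m w].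
Proof.
move=> m2 km; have m0 : (0 < m)%N by lia.
move=> /(maxX_lt _ _ _ _ m0) swap_lt /andP[lo hi].
have Xk_lt : - X m.+1 w < - x by rewrite -(reswap_k X k m.+1) swap_lt.
have Xi_lt i : (1 <= i <= m)%N -> i != k -> X i w < - x.
  by move=> im ik; rewrite -(reswap_id X k m.+1 i w ik) ?swap_lt //; lia.
have [i0 i0m i0k] : exists2 i0, (1 <= i0 <= m)%N & i0 != k.
  by have [->|k1] := eqVneq k 1%N; [exists 2%N|exists 1%N]; lia.
split; first (rewrite ler_norml; apply/andP; split).
- by apply: le_trans (le_maxX X m w k km); lra.
- apply/maxX_le; first lia.
  move=> i im; have [->|ik] := eqVneq i k; first lra.
  by have := Xi_lt i im ik; lra.
- lra.
- apply: lt_le_trans (le_maxX (fun i w => `|X i w|) m w i0 i0m).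
  by have := Xi_lt i0 i0m i0k; rewrite ltr_normr; lra.
Qed.

Lemma exists_level_between {d} {T : measurableType d} {R : realType}
    (mu : {measure set T -> \bar R}) (U V : T -> R) :
  measurable_fun setT U -> measurable_fun setT V ->
  (0 < mu [set w | U w < V w]%R)%E ->
  exists x, (0 < mu ([set w | U w <= x]%R `&` [set w | x < V w]%R))%E.
Proof.
move=> mU mV pos; apply: contrapT => no_level.
pose level x := [set w | U w <= x] `&` [set w | x < V w].
have mlevel x : measurable (level x).
  by apply: measurableI; [apply: measurable_ler_set|apply: measurable_ltr_set];
    rewrite //; exact: measurable_cst.
have level0 x : mu (level x) = 0%E.
  by apply/eqP; rewrite eq_le measure_ge0 andbT leNgt; apply/negP => ?; apply: no_level; exists x.
pose q n : R := ratr (odflt 0%R (unpickle n : option rat)).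
have cover : [set w | U w < V w] `<=` \bigcup_n level (q n).
  move=> w /= /rat_in_itvoo[r]; rewrite in_itv /= => /andP[Ur rV].
  by exists (pickle r) => //; rewrite /q pickleK /=; split => //; exact: ltW.
have := measure_sigma_subadditive mu (fun n => mlevel (q n)) (measurable_ltr_set _ _ mU mV) cover.
by rewrite eseries0 ?leNgt ?pos // => i _ _; exact: level0.
Qed.

Section max_step.
Context {d : measure_display} {T : measurableType d} {R : realType}.
Variable P : probability T R.

Definition crossing (m : nat) (x : R) : set (m.+1.-tuple R) :=
  [set t | maxX tcoord m t < - x] `&` [set t | - x <= tcoord m.+1 t]
  `&` [set t | tcoord m.+1 t <= x].

Lemma measurable_crossing m x : (0 < m)%N -> measurable (crossing m x).
Proof.
move=> m0; have mM : measurable_fun setT (maxX (@tcoord R m.+1) m).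
  by apply: measurable_maxX => // i _; exact: measurable_tcoord.
apply: measurableI; first apply: measurableI.
- by apply: measurable_ltr_set => //; exact: measurable_cst.
- by apply: measurable_ler_set; [exact: measurable_cst|exact: measurable_tcoord].
- by apply: measurable_ler_set; [exact: measurable_tcoord|exact: measurable_cst].
Qed.

Lemma preimage_rvec_crossing (Y : nat -> T -> R) m x : (0 < m)%N ->
  rvec Y m.+1 @^-1` crossing m x = [set w | maxX Y m w < - x]
    `&` [set w | - x <= Y m.+1 w] `&` [set w | Y m.+1 w <= x].
Proof.
move=> m0; apply/seteqP; split=> w /=;
  by rewrite /crossing /= maxX_rvec ?tcoord_rvec //; lia.
Qed.

Lemma RE_abs_maxX_step (X : nat -> T -> R) m (x : R) :
  (2 <= m)%N -> RE_l P X m.+1 ->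
  (forall i, (1 <= i <= m.+1)%N -> measurable_fun setT (X i)) ->
  (P [set w | `|maxX X m.+1 w| <= x]%R +
   P ([set w | maxabsX X m w <= x]%R `&` [set w | x < X m.+1 w]%R)
     <= P [set w | `|maxX X m w| <= x]%R)%E.
Proof.
move=> m2 [k [klt RE]] mX; have m0 : (0 < m)%N by lia.
have km : (1 <= k <= m)%N by lia.
have kl : k != m.+1 by lia.
have mcross := measurable_crossing m x m0.
have mmax j : (0 < j <= m.+1)%N -> measurable_fun setT (maxX X j).
  by case/andP=> j0 jm; apply: measurable_maxX => // i ij; apply: mX; lia.
have mmaxabs : measurable_fun setT (maxabsX X m).
  apply: measurable_maxX => // i im; apply: measurableT_comp => //; apply: mX; lia.
have mabs j : (0 < j <= m.+1)%N -> measurable [set w | `|maxX X j w| <= x].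
  move=> jm; apply: measurable_ler_set; last exact: measurable_cst.
  by apply: measurableT_comp => //; exact: mmax.
apply: (le_measure_exchange _ _ _ (rvec X m.+1 @^-1` crossing m x)
                            (rvec (reswap X k m.+1) m.+1 @^-1` crossing m x)).
- by apply: mabs; lia.
- by apply: mabs; lia.
- by apply: measurable_preimageT mcross; exact: measurable_rvec.
- apply: measurable_preimageT mcross.
  by apply: measurable_rvec => i il; apply: (measurable_reswap _ _ _ _ _ mX il); lia.
- apply: measurableI; first by apply: measurable_ler_set => //; exact: measurable_cst.
  by apply: measurable_ltr_set; [exact: measurable_cst|apply: mX; lia].
- move=> w /(abs_maxXS_le _ _ _ _ m0) [Bw|[lt lo hi]]; [by left|right].
  by rewrite preimage_rvec_crossing.
- exact: RE.
- rewrite preimage_rvec_crossing // => w [[/reswap_crossing swap lo] hi].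
  rewrite /= reswap_l // in lo hi.
  have [|Bw Xgt _] := swap m2 km; first by rewrite lo hi.
  by split=> //; apply/negP; rewrite -ltNge (abs_maxX_gt _ _ _ _ _ _ Xgt); lia.
- move=> w [abs_le Xgt]; split; first exact: le_trans (abs_maxX_le _ _ _ m0) abs_le.
  by apply/negP; rewrite -ltNge (abs_maxX_gt _ _ _ _ _ _ Xgt); lia.
- rewrite preimage_rvec_crossing //; apply/seteqP; split=> // w /=.
  move=> [[[/reswap_crossing swap lo] hi] [abs_le _]]; rewrite /= reswap_l // in lo hi.
  have [|_ _] := swap m2 km; first by rewrite lo hi.
  by rewrite ltNge abs_le.
Qed.

Lemma RE_st_le_abs_maxX (X : nat -> T -> R) m : (2 <= m)%N -> RE_l P X m.+1 ->
  (forall i, (1 <= i <= m.+1)%N -> measurable_fun setT (X i)) ->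
  st_le P (fun w => `|maxX X m w|) (fun w => `|maxX X m.+1 w|).
Proof.
move=> m2 RE mX x; apply: le_trans (RE_abs_maxX_step X m x m2 RE mX).
exact/leeDl/measure_ge0.
Qed.

Lemma RE_st_lt_abs_maxX (X : nat -> T -> R) m : (2 <= m)%N -> RE_l P X m.+1 ->
  (forall i, (1 <= i <= m.+1)%N -> measurable_fun setT (X i)) ->
  (0 < P [set w | maxabsX X m w < X m.+1 w]%R)%E ->
  st_lt P (fun w => `|maxX X m w|) (fun w => `|maxX X m.+1 w|).
Proof.
move=> m2 RE mX pos; split; first exact: RE_st_le_abs_maxX.
have mmaxabs : measurable_fun setT (maxabsX X m).
  by apply: measurable_maxX => [|i im]; [lia|apply: measurableT_comp => //; apply: mX; lia].
have mXl : measurable_fun setT (X m.+1) by apply: mX; lia.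
have [x x_pos] := exists_level_between _ _ _ mmaxabs mXl pos.
exists x; apply: lt_le_trans (RE_abs_maxX_step X m x m2 RE mX).
rewrite lteDl // fin_num_measure //; apply: measurable_ler_set => //.
apply: measurableT_comp => //; apply: measurable_maxX => [|i im]; [|apply: mX]; lia.
Qed.

Lemma RE_eq_dist_abs_maxX2 (X : nat -> T -> R) : RE_l P X 2 ->
  (forall i, (1 <= i <= 2)%N -> measurable_fun setT (X i)) ->
  eq_dist P (fun w => `|X 1%N w|) (fun w => `|maxX X 2 w|).
Proof.
move=> [k [k12 RE]] mX A mA; have k1 : k = 1%N by lia.
subst k.
have mX1 : measurable_fun setT (X 1%N) by exact: mX.
have mX2 : measurable_fun setT (X 2%N) by exact: mX.
pose above := (fun t : 2.-tuple R => `|tcoord 2 t|) @^-1` A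
  `&` [set t | tcoord 1 t < tcoord 2 t].
have mabove : measurable above.
  apply: measurableI; last by apply: measurable_ltr_set; exact: measurable_tcoord.
  by apply: measurable_preimageT mA; apply: measurableT_comp => //; exact: measurable_tcoord.
pose below := (fun w => `|X 1%N w|) @^-1` A `&` [set w | X 2%N w <= X 1%N w].
have mbelow : measurable below.
  apply: measurableI; last exact: measurable_ler_set.
  by apply: measurable_preimageT mA; exact: measurableT_comp.
have mabove_swap : measurable (rvec (reswap X 1 2) 2 @^-1` above).
  apply: measurable_preimageT mabove; apply: measurable_rvec => i i2.
  by apply: (measurable_reswap _ _ _ _ _ mX i2).
have mabove_X : measurable (rvec X 2 @^-1` above).
  by apply: measurable_preimageT mabove; exact: measurable_rvec.
have X1E : (fun w => `|X 1%N w|) @^-1` A = below `|` rvec (reswap X 1 2) 2 @^-1` above.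
  apply/seteqP; split=> w; rewrite /below /above /= !tcoord_rvec //= /reswap /= normrN ltrN2.
    by move=> Aw; case: (leP (X 2%N w) (X 1%N w)); [left|right].
  by case=> -[].
have maxE : (fun w => `|maxX X 2 w|) @^-1` A = below `|` rvec X 2 @^-1` above.
  apply/seteqP; split=> w; rewrite /below /above /= !tcoord_rvec //= /maxX /=.
    by case: (leP (X 2%N w) (X 1%N w)); [left|right].
  by case: (leP (X 2%N w) (X 1%N w)) => ? [[]|[]].
have disj (C : set T) : C `<=` [set w | X 1%N w < X 2%N w] -> below `&` C = set0.
  move=> CX; apply/seteqP; split=> // w [[_ /= X21] /CX /=].
  by rewrite ltNge X21.
have disj_swap : below `&` rvec (reswap X 1 2) 2 @^-1` above = set0.
  by apply: disj => w; rewrite /above /= !tcoord_rvec //= /reswap /= ltrN2 => -[].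
have disj_X : below `&` rvec X 2 @^-1` above = set0.
  by apply: disj => w; rewrite /above /= !tcoord_rvec // => -[].
rewrite X1E maxE !measureU //; congr (_ + _); symmetry; exact: RE.
Qed.

End max_step.

Lemma idx_le_trans l i n : idx_le l n -> (i <= l)%N -> idx_le i n.
Proof. by case: n => //= m lm il; exact: leq_trans il lm. Qed.

Section from_RE.
Context {d : measure_display} {T : measurableType d} {R : realType}.
Variables (P : probability T R) (X : nat -> T -> R) (n : option nat).
Hypothesis n2 : idx_le 2 n.
Hypothesis mX : forall i, (1 <= i)%N -> idx_le i n -> measurable_fun setT (X i).
Hypothesis RE : forall l, (2 <= l)%N -> idx_le l n -> RE_l P X l.

Let mX_upto l : idx_le l n -> forall i, (1 <= i <= l)%N -> measurable_fun setT (X i).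
Proof. by move=> ln i /andP[i1 il]; apply: mX => //; exact: idx_le_trans ln il. Qed.

Let eq_dist2 : eq_dist P (fun w => `|X 1%N w|) (fun w => `|maxX X 2 w|).
Proof. exact: RE_eq_dist_abs_maxX2 (RE 2 isT n2) (mX_upto 2 n2). Qed.

Lemma RE_SIAMX : SIAMX P X n.
Proof.
split=> // -[|m] // m3 mn.
apply: RE_st_le_abs_maxX (mX_upto _ mn); first lia.
by apply: RE; first lia.
Qed.

Lemma RE_SSIAMX : (forall l, (3 <= l)%N -> idx_le l n ->
    (0 < P [set w | maxabsX X l.-1 w < X l w]%R)%E) -> SSIAMX P X n.
Proof.
move=> pos; split=> // -[|m] // m3 mn.
apply: RE_st_lt_abs_maxX (mX_upto _ mn) (pos _ m3 mn); first lia.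
by apply: RE; first lia.
Qed.

End from_RE.

Definition opp_tuple {R : realType} {l : nat} (t : l.-tuple R) : l.-tuple R :=
  map_tuple -%R t.

Lemma measurable_opp_tuple {R : realType} l : measurable_fun setT (@opp_tuple R l).
Proof.
apply/measurable_fun_tnthP => i.
rewrite (_ : _ \o _ = fun t => - tnth t i); first exact: measurable_funN (measurable_tnth i).
by apply/funext => t /=; rewrite tnth_map.
Qed.

Section opposite.
Context {d : measure_display} {T : measurableType d} {R : realType}.
Variable P : probability T R.
Implicit Types (X : nat -> T -> R).

Local Notation oppX X := (fun i w => - X i w).

Lemma RE_kl_oppr X k l : RE_kl P X k l -> RE_kl P (oppX X) k l.
Proof.
move=> RE A mA.
have oppE (Y : nat -> T -> R) : rvec (oppX Y) l = opp_tuple \o rvec Y l.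
  apply/funext => w; apply: eq_from_tnth => i.
  by rewrite tnth_mktuple /opp_tuple /comp tnth_map tnth_mktuple.
have -> : reswap (oppX X) k l = oppX (reswap X k l).
  by apply/funext => i; apply/funext => w; rewrite /reswap; case: (i == k); case: (i == l).
rewrite !oppE !comp_preimage; apply: RE.
by apply: measurable_preimageT mA; exact: measurable_opp_tuple.
Qed.

Lemma abs_minX_oppr X j : (0 < j)%N ->
  (fun w => `|minX X j w|) = (fun w => `|maxX (oppX X) j w|).
Proof. by move=> j0; apply/funext => w; rewrite minX_oppr // normrN. Qed.

Lemma SIAMX_oppr X n : SIAMX P (oppX X) n -> SIAMN P X n.
Proof.
case=> eq2 st; split=> [|l l3 ln].
  by rewrite abs_minX_oppr //; under eq_fun do rewrite -normrN.
have [l0 l'0] : (0 < l)%N /\ (0 < l.-1)%N by lia.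
by rewrite !abs_minX_oppr //; exact: st.
Qed.

Lemma SSIAMX_oppr X n : SSIAMX P (oppX X) n -> SSIAMN P X n.
Proof.
case=> eq2 st; split=> [|l l3 ln].
  by rewrite abs_minX_oppr //; under eq_fun do rewrite -normrN.
have [l0 l'0] : (0 < l)%N /\ (0 < l.-1)%N by lia.
by rewrite !abs_minX_oppr //; exact: st.
Qed.

Lemma maxabsX_oppr X j w : (0 < j)%N -> maxabsX (oppX X) j w = maxabsX X j w.
Proof. by move=> j0; apply: eq_maxX => // i _; rewrite normrN. Qed.

End opposite.

Theorem theorem3p6 (d : measure_display) (T : measurableType d) (R : realType)
    (P : probability T R) (X : nat -> T -> R) (n : option nat) :
  idx_le 2 n ->
  (forall i, (1 <= i)%N -> idx_le i n -> measurable_fun [set: T] (X i)) ->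
  (forall l, (2 <= l)%N -> idx_le l n -> RE_l P X l) ->
  [/\ SIAMX P X n, SIAMN P X n,
      ((forall l, (3 <= l)%N -> idx_le l n ->
          (0 < P [set w | (maxabsX X l.-1 w < X l w)%R])%E) -> SSIAMX P X n)
    & ((forall l, (3 <= l)%N -> idx_le l n ->
          (0 < P [set w | (X l w < - maxabsX X l.-1 w)%R])%E) -> SSIAMN P X n)].
Proof.
move=> n2 mX RE; pose X' i w := - X i w.
have mX' i : (1 <= i)%N -> idx_le i n -> measurable_fun [set: T] (X' i).
  by move=> i1 iN; apply: measurable_funN; exact: mX.
have RE' l : (2 <= l)%N -> idx_le l n -> RE_l P X' l.
  by move=> l2 ln; have [k [kl REk]] := RE l l2 ln; exists k; split=> //; exact: RE_kl_oppr.
split.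
- exact: RE_SIAMX.
- exact/SIAMX_oppr/RE_SIAMX.
- exact: RE_SSIAMX.
move=> pos; apply/SSIAMX_oppr/RE_SSIAMX => // l l3 ln.
have l0 : (0 < l.-1)%N by lia.
have -> : [set w | maxabsX X' l.-1 w < X' l w] = [set w | X l w < - maxabsX X l.-1 w].
  by apply/seteqP; split=> w /=; rewrite maxabsX_oppr // ltrNr.
exact: pos.
Qed.
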